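(* Let $\alpha\in(0,1)$ and let $\{a_n\}$ be a positive sequence. Suppose there exists $\delta>0$ such that for all $\epsilon>0$ and $\tilde\alpha\in[\alpha-\delta,\alpha+\delta]$, $$\sup_{P\in\mathbf P_0}P\big(c_{n,1-\tilde\alpha}(P)-\epsilon\le I_n\le c_{n,1-\tilde\alpha}(P)+\epsilon\big)\le a_n^{-1}(\epsilon\wedge1)+o(1).$$ (i) If $I_n\le U_{n,P}+o_p(a_n)$ and $\hat U_n\ge U^\star_{n,P}+o_p(a_n)$ uniformly in $P\in\mathbf P_0$, for some $U^\star_{n,P}$ independent of $\{V_i\}_{i=1}^n$ and equal in distribution to $U_{n,P}$, then $\limsup_{n\to\infty}\sup_{P\in\mathbf P_0}P(I_n>\hat c_{n,1-\alpha})\le\alpha$. (ii) If $I_n=U_{n,P}+o_p(a_n)$ and $\hat U_n=U^\star_{n,P}+o_p(a_n)$ uniformly in $P\in\mathbf P_0$, for some $U^\star_{n,P}$ independent of $\{V_i\}_{i=1}^n$ and equal in distribution to $U_{n,P}$, then $\limsup_{n\to\infty}\sup_{P\in\mathbf P_0}|P(I_n>\hat c_{n,1-\alpha})-\alpha|=0$.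
   Context: Data $\{V_i\}_{i=1}^n$ are i.i.d. with law $P$ in a family $\mathbf P_0$; all random variables are defined on a common (possibly enlarged) probability space. $I_n$ is a real statistic computed from the data, $\hat U_n$ a real random variable depending on the data and possibly on auxiliary randomness, and $U_{n,P}$, $U^\star_{n,P}$ real random variables. $c_{n,1-\alpha}(P)\equiv\inf\{u:P(I_n\le u)\ge1-\alpha\}$ and $\hat c_{n,1-\alpha}\equiv\inf\{u:P(\hat U_n\le u\mid\{V_i\}_{i=1}^n)\ge1-\alpha\}$. $X_n=o_p(b_n)$ uniformly in $P\in\mathbf P_0$ means that for every $\epsilon>0$, $\limsup_n\sup_{P\in\mathbf P_0}P(|X_n|>\epsilon b_n)=0$. *)

From HB Require Import structures.
From mathcomp Require Import all_boot all_order all_algebra.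
From mathcomp Require Import all_classical all_reals all_analysis.
Set Implicit Arguments. Unset Strict Implicit. Unset Printing Implicit Defensive.
Import Order.TTheory GRing.Theory Num.Theory.
Local Open Scope classical_set_scope.
Local Open Scope ring_scope.

Section Defs.
Context {R : realType} {dO dT dW : measure_display}
  {Om : measurableType dO} {T : measurableType dT} {W : measurableType dW}.

(* The data vector (V_1,...,V_n), indexed from 0: [V 0; ...; V (n-1)]. *)
Definition data (V : nat -> Om -> T) (n : nat) (w : Om) : n.-tuple T :=
  [tuple V i w | i < n].

Definition iid_with_law (mu : probability Om R) (V : nat -> Om -> T)
    (P : probability T R) : Prop :=
  (forall i, measurable_fun setT (V i)) /\
  (forall i (B : set T), measurable B -> mu (V i @^-1` B) = P B) /\
  (forall n (B : 'I_n -> set T), (forall i, measurable (B i)) ->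
     mu (\bigcap_(i in [set: 'I_n]) (V i @^-1` B i)) =
     (\prod_(i < n) mu (V i @^-1` B i))%E).

Definition indep {dA dB} {A : measurableType dA} {B : measurableType dB}
    (mu : probability Om R) (X : Om -> A) (Y : Om -> B) : Prop :=
  forall (SA : set A) (SB : set B), measurable SA -> measurable SB ->
    mu (X @^-1` SA `&` Y @^-1` SB) = (mu (X @^-1` SA) * mu (Y @^-1` SB))%E.

Definition eq_in_law (mu : probability Om R) (X Y : Om -> R) : Prop :=
  forall B : set R, measurable B -> mu (X @^-1` B) = mu (Y @^-1` B).

(* (1-beta)-type quantile: inf {u : mu(X <= u) >= beta}, in \bar R
   (inf of the empty set is +oo, of an unbounded-below set is -oo). *)
Definition quantile (mu : probability Om R) (X : Om -> R) (beta : R) : \bar R :=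
  ereal_inf [set u%:E | u in [set u : R | (beta%:E <= mu [set w | (X w <= u)%R])%E]].

(* Conditional c.d.f. of Uhat_n = g n (data) (xi n) given the data, where the
   auxiliary randomness xi n is independent of the data:
   P(Uhat_n <= u | V_1..V_n)(w) = mu{w' : g n (data n w) (xi n w') <= u}. *)
Definition cond_cdf (mu : probability Om R) (V : nat -> Om -> T)
    (g : forall n, n.-tuple T -> W -> R) (xi : nat -> Om -> W) (n : nat)
    (w : Om) (u : R) : \bar R :=
  mu [set w' | g n (data V n w) (xi n w') <= u].

Definition cond_quantile (mu : probability Om R) (V : nat -> Om -> T)
    (g : forall n, n.-tuple T -> W -> R) (xi : nat -> Om -> W) (n : nat)
    (beta : R) (w : Om) : \bar R :=
  ereal_inf [set u%:E | u in [set u : R | (beta%:E <= cond_cdf mu V g xi n w u)%E]].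

Definition supP (P0 : set (probability T R)) (F : probability T R -> \bar R)
  : \bar R := ereal_sup [set F P | P in P0].

Definition unif_op (P0 : set (probability T R)) (pr : probability T R -> probability Om R)
    (X : probability T R -> nat -> Om -> R) (b : nat -> R) : Prop :=
  (forall P, P0 P -> forall n, measurable_fun setT (X P n)) /\
  forall eps : R, 0 < eps ->
    limn_esup (fun n => supP P0 (fun P =>
      pr P [set w | eps * b n < `|X P n w|])) = 0%E.

End Defs.

From HB Require Import structures.
From mathcomp Require Import all_boot all_order all_algebra.
From mathcomp Require Import all_classical all_reals all_analysis.
From mathcomp Require Import measurable_realfun.
From mathcomp Require Import ring lra zify.
Set Implicit Arguments. Unset Strict Implicit. Unset Printing Implicit Defensive.
Import Order.TTheory GRing.Theory Num.Theory.
Local Open Scope classical_set_scope.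
Local Open Scope ring_scope.

(* Let c be the (1 - alpha - 2 eta)-quantile of I_n and e := eta a_n.  The test
   rejects only if I_n > c - 3e or if the conditional c.d.f. of the bootstrap
   statistic at c - 3e is at least 1 - alpha.  The first event has probability
   at most alpha + 2 eta plus the mass of I_n within 3e of c, which
   anti-concentration makes O(eta).  Since the auxiliary randomness and U* are
   independent of the data and U* has the law of U, which is within e of I_n
   outside an event of probability o(1), the data for which the second event
   can happen have probability at most P(|remainder| > e) / eta = o(1).  Letting
   n -> oo and then eta -> 0 gives (i); the symmetric argument at level
   alpha - 2 eta gives the lower bound needed for (ii). *)

Section Independence.
Context {R : realType} {dO d1 d2 : measure_display} {Om : measurableType dO}
  {T1 : measurableType d1} {T2 : measurableType d2}.
Variables (mu : probability Om R) (X : Om -> T1) (Y : Om -> T2).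
Hypotheses (mX : measurable_fun setT X) (mY : measurable_fun setT Y).
Local Open Scope ereal_scope.

Lemma indep_sym : indep mu X Y -> indep mu Y X.
Proof. by move=> XY SB SA mB mA; rewrite setIC XY // muleC. Qed.

Let PX := distribution mu (mfun_Sub (mem_set mX : X \in mfun)).
Let PY := distribution mu (mfun_Sub (mem_set mY : Y \in mfun)).

Lemma measurable_fun_mass_section (G : set (T1 * T2)) : measurable G ->
  measurable_fun setT (fun x => mu (Y @^-1` [set y | G (x, y)])).
Proof.
move=> mG; apply: eq_measurable_fun (measurable_fun_xsection PY mG) => x _.
by congr (mu _); apply/seteqP; split => w; rewrite /xsection /= inE.
Qed.

Hypothesis XY : indep mu X Y.

Let indep_pair_integral (A : set T1) (G : set (T1 * T2)) :
  measurable A -> measurable G ->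
  mu [set w | A (X w) /\ G (X w, Y w)] =
  \int[PX]_x ((\1_A x)%:E * mu (Y @^-1` [set y | G (x, y)])).
Proof.
move=> mA mG.
have mXY : measurable_fun setT (fun w => (X w, Y w)) by exact: measurable_fun_pair.
pose PXY := distribution mu (mfun_Sub (mem_set mXY : (fun w => (X w, Y w)) \in mfun)).
have mGA : measurable (G `&` (A `*` setT)) by apply: measurableI => //; exact: measurableX.
have -> : [set w | A (X w) /\ G (X w, Y w)] = (fun w => (X w, Y w)) @^-1` (G `&` (A `*` setT)).
  by apply/seteqP; split => w /=; tauto.
have PXYE := @product_measure_unique _ _ _ _ R PX PY PXY
  (fun B C mB mC => XY mB mC) _ mGA.
apply: eq_trans (esym PXYE) _.
transitivity (\int[PX]_x PY (xsection (G `&` (A `*` setT)) x)); first by [].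
apply: eq_integral => x _; rewrite indicE /xsection.
case: (boolP (x \in A)) => xA /=; rewrite ?mul1e ?mul0e.
  congr (mu _); apply/seteqP; split => w /=; rewrite inE /=; first by case.
  by move=> Gw; split => //; split => //; exact: set_mem.
rewrite [X in PY X](_ : _ = set0) ?measure0 //.
apply/seteqP; split => y //; rewrite /= inE /= => -[_ [Ax _]].
by move: xA; rewrite (mem_set Ax).
Qed.

Lemma mass_indep_ge (A : set T1) (G : set (T1 * T2)) (beta : R) :
  measurable A -> measurable G -> (0 <= beta)%R ->
  (forall x, A x -> beta%:E <= mu (Y @^-1` [set y | G (x, y)])) ->
  beta%:E * mu (X @^-1` A) <= mu [set w | A (X w) /\ G (X w, Y w)].
Proof.
move=> mA mG b0 HA; rewrite indep_pair_integral //.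
have -> : mu (X @^-1` A) = \int[PX]_x (\1_A x)%:E by rewrite integral_indic // setIT.
rewrite -ge0_integralZl_EFin //; last exact/measurable_EFinP/measurable_indic.
apply: ge0_le_integral => //.
- by move=> x _; rewrite lee_fin mulr_ge0.
- exact/measurable_EFinP/measurable_funM/measurable_indic.
- apply: emeasurable_funM; first exact/measurable_EFinP/measurable_indic.
  exact: measurable_fun_mass_section.
- move=> x _; rewrite indicE; case: (boolP (x \in A)) => xA;
    rewrite ?mulr1n ?mulr0n ?mule1 ?mule0 ?mul1e ?mul0e //.
  exact: HA (set_mem xA).
Qed.

Lemma mass_indep_le (A : set T1) (G : set (T1 * T2)) (beta : R) :
  measurable A -> measurable G -> (0 <= beta)%R ->
  (forall x, A x -> mu (Y @^-1` [set y | G (x, y)]) <= beta%:E) ->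
  mu [set w | A (X w) /\ G (X w, Y w)] <= beta%:E * mu (X @^-1` A).
Proof.
move=> mA mG b0 HA; rewrite indep_pair_integral //.
have -> : mu (X @^-1` A) = \int[PX]_x (\1_A x)%:E by rewrite integral_indic // setIT.
rewrite -ge0_integralZl_EFin //; last exact/measurable_EFinP/measurable_indic.
apply: ge0_le_integral => //.
- by move=> x _; rewrite mule_ge0.
- apply: emeasurable_funM; first exact/measurable_EFinP/measurable_indic.
  exact: measurable_fun_mass_section.
- exact/measurable_EFinP/measurable_funM/measurable_indic.
- move=> x _; rewrite indicE; case: (boolP (x \in A)) => xA;
    rewrite ?mulr1n ?mulr0n ?mule1 ?mule0 ?mul1e ?mul0e //.
  exact: HA (set_mem xA).
Qed.
End Independence.

Section GeneralizedInverse.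
Context {R : realType}.
Local Open Scope ereal_scope.

Definition cdf_inv (F : R -> \bar R) (b : R) : \bar R :=
  ereal_inf [set u%:E | u in [set u : R | b%:E <= F u]].

Variable F : R -> \bar R.
Hypothesis F_nd : {homo F : x y / (x <= y)%R >-> x <= y}.

Lemma cdf_inv_le b x : b%:E <= F x -> cdf_inv F b <= x%:E.
Proof. by move=> bFx; apply: ereal_inf_lbound; exists x. Qed.

Lemma cdf_inv_lt_rat b x : cdf_inv F b < x%:E ->
  exists2 q : rat, (ratr q < x)%R & b%:E <= F (ratr q).
Proof.
move=> /ereal_inf_lt [_ [u /= bFu <-]]; rewrite lte_fin => ux.
have [q] := rat_in_itvoo ux; rewrite in_itv /= => /andP [uq qx].
by exists q => //; exact: le_trans bFu (F_nd (ltW uq)).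
Qed.

Lemma cdf_inv_lt b x : cdf_inv F b < x%:E -> b%:E <= F x.
Proof.
by move=> /cdf_inv_lt_rat [q qx bFq]; exact: le_trans bFq (F_nd (ltW qx)).
Qed.

Lemma cdf_inv_fin b u l : b%:E <= F u -> F l < b%:E -> exists c : R, cdf_inv F b = c%:E.
Proof.
move=> bFu Flb.
have le_u : cdf_inv F b <= u%:E := cdf_inv_le bFu.
have ge_l : l%:E <= cdf_inv F b.
  apply: le_ereal_inf_tmp => _ [v /= bFv <-]; rewrite lee_fin leNgt.
  apply/negP => vl; move: (lt_le_trans Flb (le_trans bFv (F_nd (ltW vl)))).
  by rewrite ltxx.
exists (fine (cdf_inv F b)); rewrite fineK //.
by rewrite fin_numElt (lt_le_trans (ltNyr l) ge_l) (le_lt_trans le_u (ltry u)).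
Qed.

Lemma cdf_around_cdf_inv b c e : cdf_inv F b = c%:E -> (0 < e)%R ->
  b%:E <= F (c + e) /\ F (c - e) < b%:E.
Proof.
move=> Fbc e0; split; first by apply: cdf_inv_lt; rewrite Fbc lte_fin ltrDl.
by rewrite ltNge; apply/negP => /cdf_inv_le; rewrite Fbc lee_fin; lra.
Qed.

End GeneralizedInverse.

Section LevelSets.
Context {R : realType} {d : measure_display} {Om : measurableType d}.
Variable Z : Om -> R.
Hypothesis mZ : measurable_fun setT Z.

Lemma measurable_sublevel x : measurable [set w | Z w <= x].
Proof.
have := mZ measurableT (measurable_itv `]-oo, x]); rewrite setTI.
by congr measurable; apply/seteqP; split => w; rewrite /= in_itv.
Qed.

Lemma measurable_superlevel x : measurable [set w | x < Z w].
Proof.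
have := mZ measurableT (measurable_itv `]x, +oo[); rewrite setTI.
by congr measurable; apply/seteqP; split => w; rewrite /= in_itv /= andbT.
Qed.

Lemma measurable_band x y : measurable [set w | x <= Z w <= y].
Proof.
have := mZ measurableT (measurable_itv `[x, y]); rewrite setTI.
by congr measurable; apply/seteqP; split => w; rewrite /= in_itv.
Qed.

End LevelSets.

Lemma measurable_norm_superlevel {R : realType} {d : measure_display}
    {Om : measurableType d} (Z : Om -> R) x :
  measurable_fun setT Z -> measurable [set w | x < `|Z w|].
Proof.
move=> mZ; apply: (measurable_superlevel (Z := fun w => `|Z w|)).
by apply: measurableT_comp mZ; exact: normr_measurable.
Qed.

Section RealProbability.
Context {R : realType} {d : measure_display} {Om : measurableType d}.
Variable mu : probability Om R.

Definition Pr (A : set Om) : R := fine (mu A).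

Lemma PrE A : measurable A -> mu A = (Pr A)%:E.
Proof. by move=> mA; rewrite /Pr fineK // fin_num_measure. Qed.

Lemma Pr_ge0 A : measurable A -> 0 <= Pr A.
Proof. by move=> mA; rewrite -lee_fin -PrE // measure_ge0. Qed.

Lemma Pr_le_setU A B C : measurable A -> measurable B -> measurable C ->
  A `<=` B `|` C -> Pr A <= Pr B + Pr C.
Proof.
move=> mA mB mC ABC; rewrite -lee_fin EFinD -!PrE //.
apply: le_trans (measureU2 mu mB mC).
by rewrite le_measure // inE //; exact: measurableU.
Qed.

Lemma Pr_setC A : measurable A -> Pr (~` A) = 1 - Pr A.
Proof.
move=> mA; apply: EFin_inj; rewrite -PrE; last exact: measurableC.
by rewrite probability_setC // PrE.
Qed.

Lemma Pr_sublevel_le_coupled (X Z Y : Om -> R) x e :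
  measurable_fun setT X -> measurable_fun setT Z -> measurable_fun setT Y ->
  (forall w, X w <= Z w + `|Y w|) ->
  Pr [set w | Z w <= x] <= Pr [set w | X w <= x + e] + Pr [set w | e < `|Y w|].
Proof.
move=> mX mZ mY XZY; apply: Pr_le_setU.
- exact: (measurable_sublevel mZ _).
- exact: (measurable_sublevel mX _).
- exact: measurable_norm_superlevel.
move=> w /= Zx; have [|Ye] := ltP e `|Y w|; [by right | left].
by have := XZY w; lra.
Qed.

Variable Z : Om -> R.
Hypothesis mZ : measurable_fun setT Z.

Lemma measure_sublevel_nd :
  {homo (fun x => mu [set w | Z w <= x]) : x y / x <= y >-> (x <= y)%E}.
Proof.
move=> x y xy; rewrite le_measure ?inE //; try exact: (measurable_sublevel mZ _).
by move=> w /= /le_trans; apply.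
Qed.

Lemma Pr_superlevel x : Pr [set w | x < Z w] = 1 - Pr [set w | Z w <= x].
Proof.
rewrite -Pr_setC; last exact: (measurable_sublevel mZ x).
by congr Pr; apply/seteqP; split => w /=; rewrite ltNge => /negP.
Qed.

Lemma quantile_fin b : 0 < b < 1 -> exists c : R, quantile mu Z b = c%:E.
Proof.
move=> /andP [b0 b1]; pose X := mfun_Sub (mem_set mZ : Z \in mfun).
have cdfE x : @cdf _ _ _ mu X x = mu [set w | Z w <= x].
  by congr (mu _); apply/seteqP; split => w; rewrite /= in_itv.
have cdf_fin x : @cdf _ _ _ mu X x \is a fin_num.
  exact: fin_num_measure (measurable_itv `]-oo, x]).
have [u bFu] : exists u, (b%:E <= @cdf _ _ _ mu X u)%E.
  have /fine_cvgP [_ /cvgr_gt /(_ b b1) [M [_ HM]]] := @cvg_cdfy1 _ _ R mu X.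
  exists (M + 1); rewrite -(fineK (cdf_fin _)) lee_fin ltW //.
  by apply: HM; rewrite ltrDl.
have [l Flb] : exists l, (@cdf _ _ _ mu X l < b%:E)%E.
  have /fine_cvgP [_ /cvgr_lt /(_ b b0) [M [_ HM]]] := @cvg_cdfNy0 _ _ R mu X.
  exists (M - 1); rewrite -(fineK (cdf_fin _)) lte_fin.
  by apply: HM; rewrite ltrBlDr ltrDl.
by apply: (cdf_inv_fin measure_sublevel_nd (u := u) (l := l)); rewrite -cdfE.
Qed.

Lemma Pr_quantile_window b c e : quantile mu Z b = c%:E -> 0 < e ->
  b <= Pr [set w | Z w <= c + e] /\ Pr [set w | Z w <= c - e] < b.
Proof.
move=> Zbc e0; have [] := cdf_around_cdf_inv measure_sublevel_nd Zbc e0.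
by rewrite !PrE ?lee_fin ?lte_fin //; exact: (measurable_sublevel mZ _).
Qed.

End RealProbability.

Section Bootstrap.
Context {R : realType} {dO dD dW : measure_display} {Om : measurableType dO}
  {Tp : measurableType dD} {W : measurableType dW}.
Variables (mu : probability Om R) (D : Om -> Tp) (xi : Om -> W) (gg : Tp -> W -> R).
Hypotheses (mD : measurable_fun setT D) (mxi : measurable_fun setT xi)
  (mgg : measurable_fun setT (fun p : Tp * W => gg p.1 p.2)).

Definition cdf_given (d : Tp) (t : R) : \bar R := mu [set w | gg d (xi w) <= t].

Lemma measurable_fun_gg_section d : measurable_fun setT (fun w => gg d (xi w)).
Proof.
apply: (measurableT_comp (f := gg d)) => //.
exact: (measurable_fun_pair2 (f := fun p : Tp * W => gg p.1 p.2)).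
Qed.

Lemma cdf_given_nd d : {homo cdf_given d : x y / x <= y >-> (x <= y)%E}.
Proof. exact/measure_sublevel_nd/measurable_fun_gg_section. Qed.

Lemma measurable_cdf_given t : measurable_fun setT (cdf_given ^~ t).
Proof.
by have := measurable_fun_mass_section mu mxi (measurable_sublevel mgg t).
Qed.

Lemma measurable_cdf_given_ge t b : measurable [set d | (b%:E <= cdf_given d t)%E].
Proof.
by rewrite -[X in measurable X]setTI; exact: measurable_lee (measurable_cdf_given t).
Qed.

Lemma measurable_cdf_given_lt t b : measurable [set d | (cdf_given d t < b%:E)%E].
Proof.
by rewrite -[X in measurable X]setTI; exact: measurable_lte (measurable_cdf_given t) _.
Qed.

Lemma measurable_preimage_data (A : set Tp) : measurable A -> measurable (D @^-1` A).
Proof. by move=> mA; rewrite -[X in measurable X]setTI; exact: mD. Qed.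

Variables (I : Om -> R) (b : R).
Hypothesis mI : measurable_fun setT I.

Definition reject := [set w | (cdf_inv (cdf_given (D w)) b < (I w)%:E)%E].

Lemma measurable_reject : measurable reject.
Proof.
have -> : reject = \bigcup_(q : rat) ([set w | ratr q < I w] `&`
    D @^-1` [set d | (b%:E <= cdf_given d (ratr q))%E]).
  apply/seteqP; split => w /=.
  - by move=> /(cdf_inv_lt_rat (cdf_given_nd _)) [q qI bFq]; exists q.
  - move=> [q _ [qI bFq]]; apply: le_lt_trans (cdf_inv_le bFq) _.
    by rewrite lte_fin.
apply: bigcupT_measurable_rat => q; apply: measurableI.
  exact: measurable_superlevel.
exact/measurable_preimage_data/measurable_cdf_given_ge.
Qed.

Lemma Pr_reject_le t : Pr mu reject <=
  Pr mu (D @^-1` [set d | (b%:E <= cdf_given d t)%E]) + Pr mu [set w | t < I w].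
Proof.
apply: Pr_le_setU; [exact: measurable_reject | | exact: measurable_superlevel |].
  exact/measurable_preimage_data/measurable_cdf_given_ge.
move=> w /= rej; have [lt_t|] := ltP (cdf_inv (cdf_given (D w)) b) t%:E.
  by left; exact: (cdf_inv_lt (cdf_given_nd (D w)) lt_t).
by move=> /le_lt_trans /(_ rej); rewrite lte_fin; right.
Qed.

Lemma Pr_superlevel_le_reject t : Pr mu [set w | t < I w] <=
  Pr mu reject + Pr mu (D @^-1` [set d | (cdf_given d t < b%:E)%E]).
Proof.
apply: Pr_le_setU; [exact: measurable_superlevel | exact: measurable_reject | |].
  exact/measurable_preimage_data/measurable_cdf_given_lt.
move=> w /= tI; have [|bF] := ltP (cdf_given (D w) t) b%:E; first by right.
by left; apply: le_lt_trans (cdf_inv_le bF) _; rewrite lte_fin.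
Qed.

Variable Us : Om -> R.
Hypotheses (mUs : measurable_fun setT Us) (DUs : indep mu D Us) (Dxi : indep mu D xi).

Lemma Pr_indep_sublevel (A : set Tp) x : measurable A ->
  Pr mu (D @^-1` A `&` [set w | Us w <= x]) =
  Pr mu (D @^-1` A) * Pr mu [set w | Us w <= x].
Proof.
move=> mA; have UsE : [set w | Us w <= x] = Us @^-1` `]-oo, x].
  by apply/seteqP; split => w; rewrite /= in_itv.
have mUsx := measurable_sublevel mUs x.
have mAD := measurable_preimage_data mA.
apply: EFin_inj; rewrite EFinM -!PrE //; last exact: measurableI.
by rewrite UsE DUs.
Qed.

Let measurable_gg_data t : measurable [set w | gg (D w) (xi w) <= t].
Proof.
apply: (measurable_sublevel (Z := fun w => gg (D w) (xi w))).
exact: measurableT_comp mgg (measurable_fun_pair mD mxi).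
Qed.

(* As xi is independent of the data, b * P(D in A) <= P(D in A, gg <= t); by the
   coupling this is at most P(D in A, Us <= t + e) + P(|Y| > e), and the first
   term factors because Us is independent of the data too. *)
Lemma Pr_cdf_given_ge_le (Y : Om -> R) t e :
  measurable_fun setT Y -> 0 <= b ->
  (forall w, Us w + Y w <= gg (D w) (xi w)) ->
  Pr mu (D @^-1` [set d | (b%:E <= cdf_given d t)%E]) *
    (b - Pr mu [set w | Us w <= t + e]) <= Pr mu [set w | e < `|Y w|].
Proof.
move=> mY b0 coupling; set A := [set d | _].
have mA : measurable A := measurable_cdf_given_ge t b.
have mAD := measurable_preimage_data mA.
have mass := mass_indep_ge mD mxi Dxi mA (measurable_sublevel mgg t) b0 (fun d Ad => Ad).
rewrite /= (PrE _ mAD) (PrE _ (measurableI _ _ mAD (measurable_gg_data t))) in mass.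
rewrite -EFinM lee_fin in mass.
have cover : Pr mu (D @^-1` A `&` [set w | gg (D w) (xi w) <= t]) <=
    Pr mu (D @^-1` A `&` [set w | Us w <= t + e]) + Pr mu [set w | e < `|Y w|].
  apply: Pr_le_setU; [exact: measurableI | | exact: measurable_norm_superlevel |].
    by apply: measurableI => //; exact: (measurable_sublevel mUs _).
  move=> w /= [Aw gt]; have [|] := ltP e `|Y w|; [by right | rewrite ler_norml => /andP [Y1 Y2]].
  by left; split => //; have := coupling w; lra.
rewrite Pr_indep_sublevel // in cover.
have := Pr_ge0 mu mAD; nra.
Qed.

Lemma Pr_cdf_given_lt_le (Y : Om -> R) t e :
  measurable_fun setT Y -> 0 <= b ->
  (forall w, gg (D w) (xi w) <= Us w + Y w) ->
  Pr mu (D @^-1` [set d | (cdf_given d t < b%:E)%E]) *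
    (Pr mu [set w | Us w <= t - e] - b) <= Pr mu [set w | e < `|Y w|].
Proof.
move=> mY b0 coupling; set A := [set d | _].
have mA : measurable A := measurable_cdf_given_lt t b.
have mAD := measurable_preimage_data mA.
have mass := mass_indep_le mD mxi Dxi mA (measurable_sublevel mgg t) b0 (fun d Ad => ltW Ad).
rewrite /= (PrE _ mAD) (PrE _ (measurableI _ _ mAD (measurable_gg_data t))) in mass.
rewrite -EFinM lee_fin in mass.
have cover : Pr mu (D @^-1` A `&` [set w | Us w <= t - e]) <=
    Pr mu (D @^-1` A `&` [set w | gg (D w) (xi w) <= t]) + Pr mu [set w | e < `|Y w|].
  apply: Pr_le_setU; [| exact: measurableI | exact: measurable_norm_superlevel |].
    by apply: measurableI => //; exact: (measurable_sublevel mUs _).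
  move=> w /= [Aw Ust]; have [|] := ltP e `|Y w|; [by right | rewrite ler_norml => /andP [Y1 Y2]].
  by left; split => //; have := coupling w; lra.
rewrite Pr_indep_sublevel // in cover.
have := Pr_ge0 mu mAD; nra.
Qed.

Variable U : Om -> R.
Hypotheses (mU : measurable_fun setT U) (UsU : eq_in_law mu Us U).

Let Pr_Us_sublevel x : Pr mu [set w | Us w <= x] = Pr mu [set w | U w <= x].
Proof.
have E (Z : Om -> R) : [set w | Z w <= x] = Z @^-1` `]-oo, x].
  by apply/seteqP; split => w; rewrite /= in_itv.
by rewrite /Pr !E UsU.
Qed.

Lemma Pr_reject_ub (Y1 Y2 : Om -> R) eta e c :
  measurable_fun setT Y1 -> measurable_fun setT Y2 ->
  0 < e -> 0 < eta -> 0 <= b -> quantile mu I (b - 2 * eta) = c%:E ->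
  (forall w, I w <= U w + Y1 w) -> (forall w, Us w + Y2 w <= gg (D w) (xi w)) ->
  Pr mu [set w | e < `|Y1 w|] <= eta ->
  Pr mu reject <= Pr mu [set w | e < `|Y2 w|] / eta + (1 - (b - 2 * eta))
    + Pr mu [set w | c - 3 * e <= I w <= c + 3 * e].
Proof.
move=> mY1 mY2 e0 eta0 b0 Ibc IUY UsYg small_Y1.
have [ge_b lt_b] := Pr_quantile_window mI Ibc e0.
set t := c - 3 * e.
have rej := Pr_reject_le t.
have tail : Pr mu [set w | t < I w] <=
    Pr mu [set w | c + e < I w] + Pr mu [set w | c - 3 * e <= I w <= c + 3 * e].
  apply: Pr_le_setU; try exact: (measurable_superlevel mI _).
    exact: (measurable_band mI _ _).
  move=> w /= tI; have [|Ice] := ltP (c + e) (I w); [by left | right].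
  by apply/andP; split; rewrite /t in tI; lra.
rewrite [Pr mu [set w | c + e < I w]]Pr_superlevel // in tail.
have bad := Pr_cdf_given_ge_le t e mY2 b0 UsYg.
have shift : Pr mu [set w | U w <= c - 2 * e] <= Pr mu [set w | I w <= c - e] + eta.
  apply: le_trans (Pr_sublevel_le_coupled mu _ e mI mU mY1 _) _.
    by move=> w; have := IUY w; have := ler_norm (Y1 w); lra.
  by rewrite (_ : c - 2 * e + e = c - e); [lra | ring].
rewrite (_ : t + e = c - 2 * e) ?Pr_Us_sublevel in bad; last by rewrite /t; ring.
have mass_le : Pr mu (D @^-1` [set d | (b%:E <= cdf_given d t)%E]) <=
    Pr mu [set w | e < `|Y2 w|] / eta.
  rewrite ler_pdivlMr //.
  have := Pr_ge0 mu (measurable_preimage_data (measurable_cdf_given_ge t b)); nra.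
lra.
Qed.

Lemma Pr_reject_lb (Y1 Y2 : Om -> R) eta e c :
  measurable_fun setT Y1 -> measurable_fun setT Y2 ->
  0 < e -> 0 < eta -> 0 <= b -> quantile mu I (b + 2 * eta) = c%:E ->
  (forall w, U w + Y1 w <= I w) -> (forall w, gg (D w) (xi w) <= Us w + Y2 w) ->
  Pr mu [set w | e < `|Y1 w|] <= eta ->
  1 - (b + 2 * eta) - Pr mu [set w | c - 3 * e <= I w <= c + 3 * e]
    - Pr mu [set w | e < `|Y2 w|] / eta <= Pr mu reject.
Proof.
move=> mY1 mY2 e0 eta0 b0 Ibc UYI gUsY small_Y1.
have [ge_b lt_b] := Pr_quantile_window mI Ibc e0.
set t := c + 3 * e.
have rej := Pr_superlevel_le_reject t.
have head : Pr mu [set w | I w <= t] <=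
    Pr mu [set w | I w <= c - e] + Pr mu [set w | c - 3 * e <= I w <= c + 3 * e].
  apply: Pr_le_setU; try exact: (measurable_sublevel mI _).
    exact: (measurable_band mI _ _).
  move=> w /= It; have [Ice|ceI] := leP (I w) (c - e); [by left | right].
  by apply/andP; split; rewrite /t in It; lra.
rewrite Pr_superlevel // in rej.
have bad := Pr_cdf_given_lt_le t e mY2 b0 gUsY.
have shift : Pr mu [set w | I w <= c + e] <= Pr mu [set w | U w <= c + 2 * e] + eta.
  apply: le_trans (Pr_sublevel_le_coupled mu _ e mU mI mY1 _) _.
    by move=> w; have := UYI w; have := ler_norm (- Y1 w); rewrite normrN; lra.
  by rewrite (_ : c + e + e = c + 2 * e); [lra | ring].
rewrite (_ : t - e = c + 2 * e) ?Pr_Us_sublevel in bad; last by rewrite /t; ring.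
have mass_le : Pr mu (D @^-1` [set d | (cdf_given d t < b%:E)%E]) <=
    Pr mu [set w | e < `|Y2 w|] / eta.
  rewrite ler_pdivlMr //.
  have := Pr_ge0 mu (measurable_preimage_data (measurable_cdf_given_lt t b)); nra.
lra.
Qed.

End Bootstrap.

Section LimitSuperior.
Context {R : realType}.
Local Open Scope ereal_scope.
Implicit Types (u : (\bar R)^nat) (y : \bar R).

Lemma limn_esup_le_near u y : (\forall n \near \oo, u n <= y) -> limn_esup u <= y.
Proof.
move=> [N _ uy]; rewrite /limn_esup limf_esupE.
apply: ge_ereal_inf; exists (ereal_sup (u @` [set n | (N <= n)%N])).
  by exists [set n | (N <= n)%N] => //; exists N.
by apply: ge_ereal_sup => _ [n /= Nn <-]; exact: uy.
Qed.

Lemma limn_esup_lt_near u y : limn_esup u < y -> \forall n \near \oo, u n < y.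
Proof.
rewrite /limn_esup limf_esupE => /ereal_inf_lt [_ [S [N _ NS] <-]] supy.
exists N => // n Nn; apply: le_lt_trans supy.
by apply: ereal_sup_ubound; exists n => //; exact: NS.
Qed.

Lemma limn_esup_ge0 u : (forall n, 0 <= u n) -> 0 <= limn_esup u.
Proof.
move=> u0; rewrite limn_esup_lim; apply: lime_ge; first exact: is_cvg_esups.
by apply: nearW => n; apply: le_trans (u0 n) _; apply: ereal_sup_ubound; exists n => /=.
Qed.

End LimitSuperior.

Section UniformSmallness.
Context {R : realType} {dO dT : measure_display}
  {Om : measurableType dO} {T : measurableType dT}.
Variables (P0 : set (probability T R)) (pr : probability T R -> probability Om R).
Local Open Scope ereal_scope.

Lemma le_supP (F : probability T R -> \bar R) P : P0 P -> F P <= supP P0 F.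
Proof. by move=> P0P; apply: ereal_sup_ubound; exists P. Qed.

Lemma supP_le (F : probability T R -> \bar R) y :
  (forall P, P0 P -> F P <= y) -> supP P0 F <= y.
Proof. by move=> Fy; apply: ge_ereal_sup => _ [P P0P <-]; exact: Fy. Qed.

Variables (Y : probability T R -> nat -> Om -> R) (b : nat -> R).
Hypothesis Yop : unif_op P0 pr Y b.

Lemma unif_op_near (eta x : R) : (0 < eta)%R -> (0 < x)%R ->
  \forall n \near \oo, forall P, P0 P ->
    (Pr (pr P) [set w | eta * b n < `|Y P n w|] <= x)%R.
Proof.
move=> eta0 x0; have [mY /(_ eta eta0) Y0] := Yop.
have : limn_esup (fun n => supP P0 (fun P => pr P [set w | (eta * b n < `|Y P n w|)%R]))
    < x%:E by rewrite Y0 lte_fin.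
move=> /limn_esup_lt_near; apply: filterS => n small P P0P.
have := le_lt_trans (le_supP _ P0P) small.
by rewrite (PrE _ (measurable_norm_superlevel _ (mY P P0P n))) lte_fin => /ltW.
Qed.

(* with P0 empty the suprema are all -oo, so their limit superior cannot be 0 *)
Lemma unif_op_nonempty : exists P, P0 P.
Proof.
apply/not_existsP => P0_empty; have [_ /(_ 1%R ltr01) Y0] := Yop.
suff : limn_esup (fun n =>
    supP P0 (fun P => pr P [set w | (1 * b n < `|Y P n w|)%R])) <= -oo.
  by rewrite Y0.
apply: limn_esup_le_near; apply: nearW => n.
by apply: supP_le => P P0P; case: (P0_empty P).
Qed.

End UniformSmallness.

Lemma measurable_data {R : realType} {dO dT : measure_display}
    {Om : measurableType dO} {T : measurableType dT}
    (mu : probability Om R) (V : nat -> Om -> T) (P : probability T R) n :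
  iid_with_law mu V P -> measurable_fun setT (data V n).
Proof.
move=> [mV _]; apply/measurable_fun_tnthP => i.
by apply: eq_measurable_fun (mV i) => w _; rewrite /data /= tnth_mktuple.
Qed.

(* keep the index argument of [f] and [g] explicit, as in the statement *)
Unset Implicit Arguments.

Section BootstrapValidity.
Context {R : realType} {dO dT dW : measure_display}
  {Om : measurableType dO} {T : measurableType dT} {W : measurableType dW}.
Variables (P0 : set (probability T R)) (pr : probability T R -> probability Om R)
  (V : nat -> Om -> T) (f : forall n, n.-tuple T -> R)
  (g : forall n, n.-tuple T -> W -> R) (xi : nat -> Om -> W) (alpha : R) (a : nat -> R).

Local Notation Istat n := (fun w => f n (data V n w)).

Definition anti_concentrated (alt : R) (r : nat -> R) :=
  forall (n : nat) (eps : R), 0 < eps ->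
    (supP P0 (fun P => pr P
       [set w | quantile (pr P) (Istat n) (1 - alt) - eps%:E <= (f n (data V n w))%:E
                  <= quantile (pr P) (Istat n) (1 - alt) + eps%:E])
     <= ((a n)^-1 * Num.min eps 1 + r n)%:E)%E.

Hypothesis a_gt0 : forall n, 0 < a n.
Hypothesis mf : forall n, measurable_fun setT (f n).
Hypothesis Hiid : forall P, P0 P -> iid_with_law (pr P) V P.

Let measurable_stat n P : P0 P -> measurable_fun setT (Istat n).
Proof.
move=> P0P; apply: measurableT_comp; first exact: mf.
exact: measurable_data (Hiid P P0P).
Qed.

Lemma Pr_quantile_band_le {alt r} n {P c} eta : P0 P -> anti_concentrated alt r -> 0 < eta ->
  quantile (pr P) (Istat n) (1 - alt) = c%:E ->
  Pr (pr P) [set w | c - 3 * (eta * a n) <= f n (data V n w) <= c + 3 * (eta * a n)]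
    <= 3 * eta + r n.
Proof.
move=> P0P anti eta0 Ic; set e := 3 * (eta * a n).
have e0 : 0 < e by rewrite !mulr_gt0.
have := le_trans (le_supP _ P0P) (anti n e e0); rewrite /= Ic.
rewrite (_ : [set w | (_ <= _ <= _)%E] = [set w | c - e <= f n (data V n w) <= c + e]); last first.
  by apply/seteqP; split => w /=; rewrite -EFinB -EFinD !lee_fin.
rewrite PrE ?lee_fin; last exact: measurable_band (measurable_stat n P P0P) _ _.
move/le_trans; apply; rewrite lerD2r.
have -> : 3 * eta = (a n)^-1 * e by rewrite /e; field; rewrite gt_eqF.
by apply: ler_wpM2l; [rewrite invr_ge0 ltW | rewrite ge_min lexx].
Qed.

Hypothesis alpha01 : 0 < alpha < 1.
Hypothesis mg : forall n, measurable_fun setT (fun p : n.-tuple T * W => g n p.1 p.2).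
Hypothesis mxi : forall n, measurable_fun setT (xi n).
Hypothesis xi_indep : forall P, P0 P -> forall n, indep (pr P) (xi n) (data V n).

Variables U Us : probability T R -> nat -> Om -> R.
Hypothesis mU : forall P, P0 P -> forall n, measurable_fun setT (U P n).
Hypothesis mUs : forall P, P0 P -> forall n, measurable_fun setT (Us P n).
Hypothesis Us_indep : forall P, P0 P -> forall n, indep (pr P) (Us P n) (data V n).
Hypothesis Us_law : forall P, P0 P -> forall n, eq_in_law (pr P) (Us P n) (U P n).

Local Notation rejection P n := [set w |
  (cond_quantile (pr P) V g xi n (1 - alpha) w < (f n (data V n w))%:E)%E].

Let measurable_rejection P n : P0 P -> measurable (rejection P n).
Proof.
by move=> P0P; have := measurable_reject (pr P) (measurable_data (n := n) (Hiid P P0P))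
  (mxi n) (mg n) (1 - alpha) (measurable_stat n P P0P).
Qed.

Lemma Pr_rejection_ub P n eta r (Y Y' : Om -> R) :
  P0 P -> 0 < eta -> alpha + 2 * eta < 1 -> anti_concentrated (alpha + 2 * eta) r ->
  measurable_fun setT Y -> measurable_fun setT Y' ->
  (forall w, f n (data V n w) <= U P n w + Y w) ->
  (forall w, Us P n w + Y' w <= g n (data V n w) (xi n w)) ->
  Pr (pr P) [set w | eta * a n < `|Y w|] <= eta ->
  Pr (pr P) [set w | eta * a n < `|Y' w|] <= eta * eta -> r n <= eta ->
  Pr (pr P) (rejection P n) <= alpha + 7 * eta.
Proof.
move=> P0P eta0 small_eta anti mY mY' IUY UsYg small_Y small_Y' small_r.
have /andP [alpha0 alpha1] := alpha01.
have level0 : 0 <= 1 - alpha by lra.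
have mI := measurable_stat n P P0P.
have [c Ic] := quantile_fin (pr P) mI (b := 1 - (alpha + 2 * eta)) ltac:(apply/andP; split; lra).
have band := Pr_quantile_band_le n eta P0P anti eta0 Ic.
rewrite (_ : 1 - (alpha + 2 * eta) = 1 - alpha - 2 * eta) in Ic; last by ring.
have /= := Pr_reject_ub (measurable_data (n := n) (Hiid P P0P)) (mxi n) (mg n) mI
  (mUs P P0P n) (indep_sym (Us_indep P P0P n)) (indep_sym (xi_indep P P0P n))
  (mU P P0P n) (Us_law P P0P n) mY mY' (mulr_gt0 eta0 (a_gt0 n)) eta0
  level0 Ic IUY UsYg small_Y.
have : Pr (pr P) [set w | eta * a n < `|Y' w|] / eta <= eta by rewrite ler_pdivrMr.
lra.
Qed.

Lemma Pr_rejection_lb P n eta r (Y Y' : Om -> R) :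
  P0 P -> 0 < eta -> 0 < alpha - 2 * eta -> anti_concentrated (alpha - 2 * eta) r ->
  measurable_fun setT Y -> measurable_fun setT Y' ->
  (forall w, U P n w + Y w <= f n (data V n w)) ->
  (forall w, g n (data V n w) (xi n w) <= Us P n w + Y' w) ->
  Pr (pr P) [set w | eta * a n < `|Y w|] <= eta ->
  Pr (pr P) [set w | eta * a n < `|Y' w|] <= eta * eta -> r n <= eta ->
  alpha - 7 * eta <= Pr (pr P) (rejection P n).
Proof.
move=> P0P eta0 small_eta anti mY mY' UYI gUsY small_Y small_Y' small_r.
have /andP [alpha0 alpha1] := alpha01.
have level0 : 0 <= 1 - alpha by lra.
have mI := measurable_stat n P P0P.
have [c Ic] := quantile_fin (pr P) mI (b := 1 - (alpha - 2 * eta)) ltac:(apply/andP; split; lra).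
have band := Pr_quantile_band_le n eta P0P anti eta0 Ic.
rewrite (_ : 1 - (alpha - 2 * eta) = 1 - alpha + 2 * eta) in Ic; last by ring.
have /= := Pr_reject_lb (measurable_data (n := n) (Hiid P P0P)) (mxi n) (mg n) mI
  (mUs P P0P n) (indep_sym (Us_indep P P0P n)) (indep_sym (xi_indep P P0P n))
  (mU P P0P n) (Us_law P P0P n) mY mY' (mulr_gt0 eta0 (a_gt0 n)) eta0
  level0 Ic UYI gUsY small_Y.
have : Pr (pr P) [set w | eta * a n < `|Y' w|] / eta <= eta by rewrite ler_pdivrMr.
lra.
Qed.

Hypothesis anti : exists2 delta : R, 0 < delta &
  forall alt, alpha - delta <= alt <= alpha + delta ->
  exists2 r : nat -> R, r @ \oo --> 0 & anti_concentrated alt r.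

Let exists_eta delta eps : 0 < delta -> 0 < eps -> exists2 eta, 0 < eta &
  [/\ 7 * eta <= eps, 2 * eta <= delta, 2 * eta < alpha & alpha + 2 * eta < 1].
Proof.
have /andP [alpha0 alpha1] := alpha01; move=> delta0 eps0.
set m := Num.min (Num.min eps delta) (Num.min alpha (1 - alpha)).
have m0 : 0 < m by rewrite !lt_min eps0 delta0 alpha0 subr_gt0.
have [m_eps m_delta m_alpha m_alpha'] : [/\ m <= eps, m <= delta, m <= alpha & m <= 1 - alpha].
  by split; rewrite /m !ge_min lexx ?orbT.
by exists (m / 7); [rewrite divr_gt0 | split]; lra.
Qed.

Let eventually_small {r : nat -> R} {Y Y' : probability T R -> nat -> Om -> R} {eta} :
  r @ \oo --> 0 -> unif_op P0 pr Y a -> unif_op P0 pr Y' a -> 0 < eta ->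
  \forall n \near \oo, [/\ r n <= eta,
    forall P, P0 P -> Pr (pr P) [set w | eta * a n < `|Y P n w|] <= eta &
    forall P, P0 P -> Pr (pr P) [set w | eta * a n < `|Y' P n w|] <= eta * eta].
Proof.
move=> r0 Yop Y'op eta0.
have r_small := cvgr_lt 0 r0 eta eta0.
have Y_small := unif_op_near Yop eta0 eta0.
have Y'_small := unif_op_near Y'op eta0 (mulr_gt0 eta0 eta0).
near=> n; split.
- by apply: ltW; near: n; exact: r_small.
- by near: n; exact: Y_small.
- by near: n; exact: Y'_small.
Unshelve. all: by end_near.
Qed.

Lemma limsup_rejection_le :
  (exists Y, unif_op P0 pr Y a /\
     forall P, P0 P -> forall n w, f n (data V n w) <= U P n w + Y P n w) ->
  (exists Y, unif_op P0 pr Y a /\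
     forall P, P0 P -> forall n w, Us P n w + Y P n w <= g n (data V n w) (xi n w)) ->
  (limn_esup (fun n => supP P0 (fun P => pr P (rejection P n))) <= alpha%:E)%E.
Proof.
move=> [Y [Yop IUY]] [Y' [Y'op UsYg]].
apply/lee_addgt0Pr => eps eps0; rewrite -EFinD.
have [delta delta0 anti_delta] := anti.
have [eta eta0 [eta_eps eta_delta eta_lo eta_hi]] := exists_eta delta eps delta0 eps0.
have [r r0 anti_r] := anti_delta (alpha + 2 * eta) ltac:(apply/andP; split; lra).
have [N _ small] := eventually_small r0 Yop Y'op eta0.
apply: limn_esup_le_near; exists N => // n /small [small_r small_Y small_Y'].
apply: supP_le => P P0P.
rewrite PrE ?lee_fin; last exact: measurable_rejection.
apply: le_trans (Pr_rejection_ub P n eta r (Y P n) (Y' P n) P0P eta0 eta_hi anti_r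
  (Yop.1 P P0P n) (Y'op.1 P P0P n) (IUY P P0P n) (UsYg P P0P n)
  (small_Y P P0P) (small_Y' P P0P) small_r) _.
lra.
Qed.

Lemma limsup_rejection_dev_eq0 :
  (exists Y, unif_op P0 pr Y a /\
     forall P, P0 P -> forall n w, f n (data V n w) = U P n w + Y P n w) ->
  (exists Y, unif_op P0 pr Y a /\
     forall P, P0 P -> forall n w, g n (data V n w) (xi n w) = Us P n w + Y P n w) ->
  limn_esup (fun n => supP P0 (fun P => `| pr P (rejection P n) - alpha%:E |%E)) = 0%E.
Proof.
move=> [Y [Yop IUY]] [Y' [Y'op gUsY]].
have [P1 P0P1] := unif_op_nonempty Yop.
apply/eqP; rewrite eq_le; apply/andP; split; last first.
  by apply: limn_esup_ge0 => n; apply: le_trans (le_supP _ P0P1); exact: abse_ge0.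
apply/lee_addgt0Pr => eps eps0; rewrite add0e.
have [delta delta0 anti_delta] := anti.
have [eta eta0 [eta_eps eta_delta eta_lo eta_hi]] := exists_eta delta eps delta0 eps0.
have [r r0 anti_r] := anti_delta (alpha + 2 * eta) ltac:(apply/andP; split; lra).
have [r' r'0 anti_r'] := anti_delta (alpha - 2 * eta) ltac:(apply/andP; split; lra).
have [N _ small] := eventually_small r0 Yop Y'op eta0.
have [N' _ small'] := eventually_small r'0 Yop Y'op eta0.
apply: limn_esup_le_near; exists (maxn N N') => // n.
rewrite /= geq_max => /andP [/small [small_r small_Y small_Y'] /small' [small_r' _ _]].
apply: supP_le => P P0P.
have IUY_le w : f n (data V n w) <= U P n w + Y P n w by rewrite (IUY P P0P).
have UYI_le w : U P n w + Y P n w <= f n (data V n w) by rewrite (IUY P P0P).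
have gUsY_le w : g n (data V n w) (xi n w) <= Us P n w + Y' P n w by rewrite (gUsY P P0P).
have UsYg_le w : Us P n w + Y' P n w <= g n (data V n w) (xi n w) by rewrite (gUsY P P0P).
have up := Pr_rejection_ub P n eta r (Y P n) (Y' P n) P0P eta0 eta_hi anti_r
  (Yop.1 P P0P n) (Y'op.1 P P0P n) IUY_le UsYg_le (small_Y P P0P) (small_Y' P P0P) small_r.
have lo := Pr_rejection_lb P n eta r' (Y P n) (Y' P n) P0P eta0 ltac:(lra) anti_r'
  (Yop.1 P P0P n) (Y'op.1 P P0P n) UYI_le gUsY_le (small_Y P P0P) (small_Y' P P0P) small_r'.
rewrite PrE; last exact: measurable_rejection.
by rewrite -EFinB abse_EFin lee_fin ler_norml; apply/andP; split; lra.
Qed.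

End BootstrapValidity.

Theorem lemmaD6
  (R : realType) (dO dT dW : measure_display)
  (Om : measurableType dO) (T : measurableType dT) (W : measurableType dW)
  (P0 : set (probability T R))
  (pr : probability T R -> probability Om R)
  (V : nat -> Om -> T)
  (f : forall n, n.-tuple T -> R)
  (g : forall n, n.-tuple T -> W -> R)
  (xi : nat -> Om -> W)
  (alpha : R) (a : nat -> R)
  (Halpha : 0 < alpha < 1)
  (Ha : forall n, 0 < a n)
  (Hiid : forall P, P0 P -> iid_with_law (pr P) V P)
  (Hf : forall n, measurable_fun setT (f n))
  (Hg : forall n, measurable_fun setT (fun p : n.-tuple T * W => g n p.1 p.2))
  (Hxi : forall n, measurable_fun setT (xi n))
  (Hxi_indep : forall P, P0 P -> forall n, indep (pr P) (xi n) (data V n))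
  (Hanti : exists2 delta : R, 0 < delta &
     forall alt : R, alpha - delta <= alt <= alpha + delta ->
     exists2 r : nat -> R, r @ \oo --> 0 &
     forall (n : nat) (eps : R), 0 < eps ->
       (supP P0 (fun P => pr P
          [set w | quantile (pr P) (fun w' => f n (data V n w')) (1 - alt) - eps%:E
                     <= (f n (data V n w))%:E
                     <= quantile (pr P) (fun w' => f n (data V n w')) (1 - alt) + eps%:E])
        <= ((a n)^-1 * Num.min eps 1 + r n)%:E)%E) :
  (* (i) *)
  (forall U Ustar : probability T R -> nat -> Om -> R,
     (forall P, P0 P -> forall n, measurable_fun setT (U P n)) ->
     (forall P, P0 P -> forall n, measurable_fun setT (Ustar P n)) ->
     (forall P, P0 P -> forall n, indep (pr P) (Ustar P n) (data V n)) ->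
     (forall P, P0 P -> forall n, eq_in_law (pr P) (Ustar P n) (U P n)) ->
     (exists Y, unif_op P0 pr Y a /\
        forall P, P0 P -> forall n w, f n (data V n w) <= U P n w + Y P n w) ->
     (exists Y, unif_op P0 pr Y a /\
        forall P, P0 P -> forall n w, Ustar P n w + Y P n w <= g n (data V n w) (xi n w)) ->
     (limn_esup (fun n => supP P0 (fun P => pr P
        [set w | cond_quantile (pr P) V g xi n (1 - alpha) w < (f n (data V n w))%:E]))
      <= alpha%:E)%E)
  /\
  (* (ii) *)
  (forall U Ustar : probability T R -> nat -> Om -> R,
     (forall P, P0 P -> forall n, measurable_fun setT (U P n)) ->
     (forall P, P0 P -> forall n, measurable_fun setT (Ustar P n)) ->
     (forall P, P0 P -> forall n, indep (pr P) (Ustar P n) (data V n)) ->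
     (forall P, P0 P -> forall n, eq_in_law (pr P) (Ustar P n) (U P n)) ->
     (exists Y, unif_op P0 pr Y a /\
        forall P, P0 P -> forall n w, f n (data V n w) = U P n w + Y P n w) ->
     (exists Y, unif_op P0 pr Y a /\
        forall P, P0 P -> forall n w, g n (data V n w) (xi n w) = Ustar P n w + Y P n w) ->
     limn_esup (fun n => supP P0 (fun P => `| pr P
        [set w | cond_quantile (pr P) V g xi n (1 - alpha) w < (f n (data V n w))%:E]
        - alpha%:E |%E)) = 0%E).
Proof.
split=> U Us mU mUs Us_indep Us_law.
- exact: limsup_rejection_le.
- exact: limsup_rejection_dev_eq0.
Qed.
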